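(* Let $G$ be a finite simple graph with $2i$ vertices, $i\ge1$, and let $e$ be a pair of distinct vertices of $G$. If $J\in\mathcal{E}\mathcal{C}(G+e)\setminus\mathcal{E}\mathcal{C}(G)$, then for $1\le k\le i$ the number of chains in $C_k(\emptyset;G+e)$ that are $e$-singular at $J$ equals $$\sum_{p+q=k-1,\ p,q\ge0}\Big(|C_p(J;G+e)|\cdot\sum_{J'\in\mathcal{E}\mathcal{C}(G|_J)}|C_q(\emptyset;G|_{J'})|\Big).$$
   Context: All graphs are finite simple graphs; $G|_I$ is the induced subgraph on $I\subseteq V(G)$. $\mathcal{E}\mathcal{C}(G)=\{I\subseteq V(G): G|_I \text{ has no connected component of odd order}\}$. For a pair $e$ of distinct vertices, $G+e$ is $G$ with $e$ added as an edge. For a graph $G$ of even order, $\mathcal{P}(G)=\mathcal{E}\mathcal{C}(G)\cup\{V(G)\}$, ordered by inclusion; for $I\in\mathcal{P}(G)$ and $k\ge0$, $C_k(I;G)$ is the set of chains $I=I_0\subsetneq\cdots\subsetneq I_k=V(G)$ with $I_j\in\mathcal{P}(G)$ for $1\le j\le k$; we set $|C_k(I;G)|=0$ unless $0\le k\le \frac{|V(G)|}{2}-\frac{|I|}{2}$. A chain $\emptyset=I_0\subsetneq\cdots\subsetneq I_k=V(G+e)$ in $C_k(\emptyset;G+e)$ is called $e$-singular at $I_\ell$ if $\ell$ is the smallest index with $I_\ell\notin\mathcal{E}\mathcal{C}(G)$. *)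

From mathcomp Require Import all_boot.
Set Implicit Arguments. Unset Strict Implicit. Unset Printing Implicit Defensive.

Section Graphs.
Variable T : finType.

Definition simple_graph (g : rel T) : Prop :=
  irreflexive g /\ symmetric g.

Definition add_edge (g : rel T) (u v : T) : rel T :=
  fun x y => [|| g x y, (x == u) && (y == v) | (x == v) && (y == u)].

Definition induced (g : rel T) (I : {set T}) : rel T :=
  fun x y => [&& g x y, x \in I & y \in I].

Definition comp (g : rel T) (I : {set T}) (x : T) : {set T} :=
  [set y in I | connect (induced g I) x y].

Definition no_odd_comp (g : rel T) (I : {set T}) : bool :=
  [forall x in I, ~~ odd #|comp g I x|].

(* EC(G|_V) : subsets I of V such that (G|_V)|_I = G|_I has no odd component. *)
Definition EC (g : rel T) (V : {set T}) : {set {set T}} :=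
  [set I : {set T} | (I \subset V) && no_odd_comp g I].

Definition Pos (g : rel T) (V : {set T}) : {set {set T}} := V |: EC g V.

Definition chains (g : rel T) (V I : {set T}) (k : nat) :
  {set {ffun 'I_k.+1 -> {set T}}} :=
  [set c : {ffun 'I_k.+1 -> {set T}} |
    [&& c ord0 == I, c ord_max == V,
        [forall j : 'I_k, c (inord j) \proper c (inord j.+1)] &
        [forall j : 'I_k.+1, (j != ord0) ==> (c j \in Pos g V)]]].

Definition singular_at (g : rel T) (k : nat) (c : {ffun 'I_k.+1 -> {set T}})
  (J : {set T}) : bool :=
  [exists l : 'I_k.+1,
    [&& c l \notin EC g setT,
        [forall j : 'I_k.+1, (j < l) ==> (c j \in EC g setT)] & c l == J]].

End Graphs.

From Pilot Require Import Defs.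
From mathcomp Require Import all_boot zify.
Set Implicit Arguments. Unset Strict Implicit. Unset Printing Implicit Defensive.

(* If a chain I_0 < ... < I_k of C_k(emptyset; G+e) is e-singular at J = I_l, then
   I_l, ..., I_k is a chain of C_(k-l)(J; G+e), and I_0, ..., I_(l-1) is a chain of
   C_(l-1)(emptyset; G|_J') with J' := I_(l-1) in EC(G|_J).  Conversely any such pair
   glues back to an e-singular chain: J' is a proper subset of J because J is not in
   EC(G), and the lower sets stay in P(G+e) because adding an edge merges at most two
   even components, so EC(G) is contained in EC(G+e).  Since l is determined by the
   chain, summing over l = k - p gives the formula. *)

Section Components.
Variables (T : finType) (g : rel T).
Hypothesis gsym : symmetric g.

Lemma induced_sym I : symmetric (induced g I).
Proof. by move=> x y; rewrite /induced gsym; congr (_ && _); apply: andbC. Qed.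

Lemma comp_eq I x y : connect (induced g I) x y -> Defs.comp g I x = Defs.comp g I y.
Proof.
move=> cxy; apply/setP=> z; rewrite !inE.
have csym := sym_connect_sym (induced_sym I).
by rewrite (same_connect csym cxy).
Qed.

Lemma comp_disjoint I x y :
  ~~ connect (induced g I) x y -> [disjoint Defs.comp g I x & Defs.comp g I y].
Proof.
move=> nxy; apply/pred0P=> z; rewrite /= !inE.
have csym := sym_connect_sym (induced_sym I).
apply/negP=> /andP[/andP[_ cxz] /andP[_ cyz]].
by rewrite csym in cyz; rewrite (connect_trans cxz cyz) in nxy.
Qed.

Lemma even_comp_setU I x y : ~~ odd #|Defs.comp g I x| -> ~~ odd #|Defs.comp g I y| ->
  ~~ odd #|Defs.comp g I x :|: Defs.comp g I y|.
Proof.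
have [/comp_eq <- ex _|/comp_disjoint dxy ex ey] := boolP (connect (induced g I) x y).
  by rewrite setUid.
by rewrite cardsU (disjoint_setI0 dxy) cards0 subn0 oddD negb_add (negbTE ex) (negbTE ey).
Qed.
End Components.

Section AddEdge.
Variables (T : finType) (g : rel T) (u v : T).
Hypothesis gsym : symmetric g.

Section EndpointsInside.
Variable I : {set T}.
Hypotheses (uI : u \in I) (vI : v \in I).
Local Notation gI := (induced g I).
Local Notation hI := (induced (add_edge g u v) I).

Lemma induced_add_edgeP x y :
  reflect [\/ gI x y, x = u /\ y = v | x = v /\ y = u] (hI x y).
Proof.
rewrite /induced /add_edge; apply: (iffP idP).
  case/and3P=> /or3P[gxy|/andP[/eqP-> /eqP->]|/andP[/eqP-> /eqP->]] xI yI;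
  by [apply: Or31; rewrite gxy xI yI | apply: Or32 | apply: Or33].
by case=> [/and3P[-> -> ->]|[-> ->]|[-> ->]]; rewrite ?eqxx ?uI ?vI ?orbT.
Qed.

Lemma connect_induced_add_edge x y : connect hI x y =
  connect gI x y || (connect gI x u || connect gI x v) && (connect gI u y || connect gI v y).
Proof.
apply/idP/idP.
{ case/connectP=> p; elim: p x => [|z p IHp] x /=; first by move=> _ ->; rewrite connect0.
  case/andP=> /induced_add_edgeP hxz /IHp Rzy /Rzy/orP{}Rzy.
  move: Rzy; have [/connect1 cxz|[-> ->]|[-> ->]] := hxz.
  - case=> [czy|/andP[czuv cuvy]]; first by rewrite (connect_trans cxz czy).
    by rewrite cuvy andbT; case/orP: czuv => /(connect_trans cxz) ->; rewrite ?orbT.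
  all: move=> Rzy; suff ->: connect gI u y || connect gI v y by rewrite connect0 ?orbT.
  all: by case: Rzy => [->|/andP[_ ->]]; rewrite ?orbT. }
have gh : subrel (connect gI) (connect hI).
  by apply: connect_sub => a b gab; apply/connect1/induced_add_edgeP; apply: Or31.
have huv : connect hI u v by apply/connect1/induced_add_edgeP; apply: Or32.
have hvu : connect hI v u by apply/connect1/induced_add_edgeP; apply: Or33.
case/orP=> [/gh //|/andP[/orP[] /gh cx /orP[] /gh cy]].
- exact: connect_trans cx cy.
- exact: connect_trans cx (connect_trans huv cy).
- exact: connect_trans cx (connect_trans hvu cy).
- exact: connect_trans cx cy.
Qed.

Lemma comp_add_edge x : Defs.comp (add_edge g u v) I x =
  if connect gI x u || connect gI x v then Defs.comp g I u :|: Defs.comp g I v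
  else Defs.comp g I x.
Proof.
have csym := sym_connect_sym (induced_sym gsym I).
apply/setP=> y; case: ifP => [cxuv|/negbT]; rewrite !inE connect_induced_add_edge.
  rewrite cxuv /= -andb_orr; move/orP: cxuv => cxuv; congr (_ && _); apply/orb_idl => cxy.
  by case: cxuv => c; rewrite csym in c; rewrite (connect_trans c cxy) ?orbT.
by move/negbTE->; rewrite orbF.
Qed.

Lemma no_odd_comp_add_edge_in : no_odd_comp g I -> no_odd_comp (add_edge g u v) I.
Proof.
move=> /forall_inP even; apply/forall_inP=> x xI; rewrite comp_add_edge.
by case: ifP => _; [apply: even_comp_setU; [|apply: even..] | apply: even].
Qed.
End EndpointsInside.

Lemma no_odd_comp_add_edge I : no_odd_comp g I -> no_odd_comp (add_edge g u v) I.
Proof.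
have [/andP[uI vI]|uvI] := boolP ((u \in I) && (v \in I)).
  exact: no_odd_comp_add_edge_in.
have E : induced (add_edge g u v) I =2 induced g I.
  move=> x y; rewrite /induced /add_edge.
  case: (boolP (x \in I)) => xI; case: (boolP (y \in I)) => yI; rewrite ?andbF //= !andbT.
  by apply/orb_idr=> /orP[]/andP[/eqP ex /eqP ey]; move: uvI; rewrite -ex -ey xI yI.
move=> /forall_inP even; apply/forall_inP=> x xI.
rewrite (_ : Defs.comp _ I x = Defs.comp g I x) ?even //.
by apply/setP=> y; rewrite !inE (eq_connect E).
Qed.

Lemma EC_add_edge V : {subset EC g V <= EC (add_edge g u v) V}.
Proof. by move=> I; rewrite !inE => /andP[-> /no_odd_comp_add_edge]. Qed.
End AddEdge.

Section ChainEncoding.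
Variable T : finType.
Local Notation chain n := {ffun 'I_n.+1 -> {set T}}.

(* Out-of-range indices [j > n] read the junk value [c ord0]. *)
Definition chain_nth n (c : chain n) (j : nat) := c (inord j).

Definition mkchain n (f : nat -> {set T}) : chain n := [ffun j : 'I_n.+1 => f j].

Lemma chain_nth_ord n (c : chain n) (j : 'I_n.+1) : chain_nth c j = c j.
Proof. by rewrite /chain_nth inord_val. Qed.

Lemma mkchainK n f j : j <= n -> chain_nth (mkchain n f) j = f j.
Proof. by move=> jn; rewrite /chain_nth ffunE inordK. Qed.

Lemma chain_nthK n (c : chain n) : mkchain n (chain_nth c) = c.
Proof. by apply/ffunP=> j; rewrite ffunE chain_nth_ord. Qed.

Lemma mkchain_max n f : mkchain n f ord_max = f n.
Proof. by rewrite ffunE. Qed.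

Lemma eq_mkchain n f f' : (forall j, j <= n -> f j = f' j) -> mkchain n f = mkchain n f'.
Proof. by move=> ff'; apply/ffunP=> j; rewrite !ffunE ff' // -ltnS. Qed.

Lemma mkchainP (g : rel T) (V I : {set T}) n (f : nat -> {set T}) : reflect
  [/\ f 0 = I, f n = V, forall j, j < n -> f j \proper f j.+1
    & forall j, 0 < j <= n -> f j \in Pos g V]
  (mkchain n f \in chains g V I n).
Proof.
rewrite inE /mkchain !ffunE /=.
apply: (iffP and4P) => [[/eqP f0 /eqP fn /forallP fS /forallP fP]|].
  split=> // [j jn|j /andP[j0 jn]].
    by have := fS (Ordinal jn); rewrite !ffunE /= !inordK // ltnW.
  by have := implyP (fP (Ordinal (jn : j < n.+1))); rewrite ffunE -lt0n; apply.
case=> -> -> fS fP; split=> //; apply/forallP=> j.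
  by rewrite !ffunE /= !inordK ?ltnS ?fS // ltnW.
by rewrite ffunE -lt0n; apply/implyP=> j0; apply: fP; rewrite j0 -ltnS /=.
Qed.

Lemma proper_chain_sub n (f : nat -> {set T}) :
  (forall j, j < n -> f j \proper f j.+1) -> forall i j, i <= j <= n -> f i \subset f j.
Proof.
move=> fS i j /andP[ij jn]; have inn := leq_trans ij jn.
apply: (@homo_leq_in _ [pred m | m <= n] f (fun A B => A \subset B)) ij;
  rewrite ?inE ?inn //.
- by move=> B A C; apply: subset_trans.
- by move=> a b _ bn c /andP[_ /ltnW cb]; apply: leq_trans cb bn.
- by move=> m _ mn; apply/proper_sub/fS.
Qed.

End ChainEncoding.

Section ChainSplitting.
Variables (T : finType) (k : nat).
Local Notation chain n := {ffun 'I_n.+1 -> {set T}}.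

Definition split_chain l (c : chain k) :=
  (mkchain (k - l) (fun j => chain_nth c (l + j)), mkchain l.-1 (chain_nth c)).

Definition join_chain l (x : chain (k - l) * chain l.-1) : chain k :=
  mkchain k (fun j => if j < l then chain_nth x.2 j else chain_nth x.1 (j - l)).
Arguments join_chain : clear implicits.

Lemma split_chainK l : cancel (split_chain l) (join_chain l).
Proof.
move=> c; rewrite -[RHS]chain_nthK; apply: eq_mkchain => j jk /=.
by case: ltnP => jl; rewrite mkchainK ?subnKC //; lia.
Qed.

Lemma join_chainK l : 0 < l <= k -> cancel (join_chain l) (split_chain l).
Proof.
move=> lk [up lo]; rewrite /split_chain; congr pair.
  by rewrite -[RHS]chain_nthK; apply: eq_mkchain => j jn; rewrite mkchainK ?ifN ?addKn //; lia.
by rewrite -[RHS]chain_nthK; apply: eq_mkchain => j jn; rewrite mkchainK ?ifT //; lia.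
Qed.

End ChainSplitting.

Lemma card_bigcup_disjoint (A : finType) n (S : 'I_n -> {set A}) :
  (forall x i j, x \in S i -> x \in S j -> i = j) ->
  #|\bigcup_(i < n) S i| = \sum_(i < n) #|S i|.
Proof.
move=> Suniq; rewrite -sum1_card big_mkcond /=.
under [RHS]eq_bigr do rewrite -sum1_card big_mkcond /=.
rewrite exchange_big /=; apply: eq_bigr => x _.
case: bigcupP => [[i _ xSi]|nS]; last first.
  by rewrite big1 // => i _; case: ifP => // xSi; case: nS; exists i.
rewrite (bigD1 i) //= xSi big1 // => j ji.
by case: ifP => // /(Suniq _ _ _ xSi) ij; rewrite ij eqxx in ji.
Qed.

Section EvenSets.
Variables (T : finType) (g : rel T).
Implicit Types V I : {set T}.

Lemma set0_EC V : set0 \in EC g V.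
Proof. by rewrite inE sub0set; apply/forall_inP=> x; rewrite inE. Qed.

Lemma EC_setT V I : I \in EC g V -> I \in EC g setT.
Proof. by rewrite !inE subsetT => /andP[]. Qed.

Lemma EC_sub V I : I \subset V -> I \in EC g setT -> I \in EC g V.
Proof. by rewrite !inE subsetT => ->. Qed.

Lemma EC_Pos V I : I \in EC g V -> I \in Pos g V.
Proof. exact: setU1r. Qed.

Lemma Pos_EC V I : V \in EC g setT -> I \in Pos g V -> I \in EC g setT.
Proof. by move=> VE; rewrite in_setU1 => /predU1P[->|/EC_setT]. Qed.

Definition lower_chains J q := [set d : {ffun 'I_q.+1 -> {set T}} |
  (d ord_max \in EC g J) && (d \in chains g (d ord_max) set0 q)].

Lemma card_lower_chains J q :
  #|lower_chains J q| = \sum_(J' in EC g J) #|chains g J' set0 q|.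
Proof.
rewrite -sum1_card (partition_big (fun d : {ffun 'I_q.+1 -> {set T}} => d ord_max)
  (fun J0 => J0 \in EC g J)) => [|d]; last first.
  by rewrite inE => /andP[].
apply: eq_bigr => J' J'E; rewrite -sum1_card; apply: eq_bigl => d.
rewrite in_set; apply/andP/idP => [[/andP[_ dC] /eqP <-] //|dC].
have dJ' : d ord_max = J' by move: dC; rewrite in_set => /and4P[_ /eqP].
by rewrite dJ' J'E dC eqxx.
Qed.

End EvenSets.

Section SingularChains.
Variables (T : finType) (g : rel T) (u v : T) (J : {set T}) (k : nat).
Hypothesis gsym : symmetric g.
Hypotheses (JEC : J \in EC (add_edge g u v) setT) (JnEC : J \notin EC g setT).
Local Notation h := (add_edge g u v).
Local Notation chain := {ffun 'I_k.+1 -> {set T}}.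

(* The clause I_l \notin EC(G) of [singular_at] is dropped: it follows from [JnEC]. *)
Definition singular_at_level (c : chain) l :=
  (chain_nth c l == J) && [forall j : 'I_l, chain_nth c j \in EC g setT].

Lemma singular_at_levelP c l : reflect
  (chain_nth c l = J /\ forall j, j < l -> chain_nth c j \in EC g setT)
  (singular_at_level c l).
Proof.
apply: (iffP andP) => [[/eqP cl /forallP cE]|[-> cE]]; split=> //.
  by move=> j jl; exact: (cE (Ordinal jl)).
by apply/forallP=> j; apply: cE.
Qed.

Lemma singular_at_level_inj c l1 l2 :
  singular_at_level c l1 -> singular_at_level c l2 -> l1 = l2.
Proof.
have ltF a b : a < b -> singular_at_level c a -> singular_at_level c b -> False.
  move=> ab /singular_at_levelP[ca _] /singular_at_levelP[_ /(_ a ab)].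
  by rewrite ca (negbTE JnEC).
move=> s1 s2; case: (ltngtP l1 l2) => // ll.
  by case: (ltF _ _ ll s1 s2).
by case: (ltF _ _ ll s2 s1).
Qed.

Lemma singular_atE c : singular_at g c J = [exists l : 'I_k.+1, singular_at_level c l].
Proof.
apply: eq_existsb => l; rewrite /singular_at_level chain_nth_ord.
case: eqP => [->|]; last by rewrite !andbF.
rewrite JnEC andbT /=; apply/forallP/forallP=> cE j.
  have jk : j < k.+1 := ltn_trans (ltn_ord j) (ltn_ord l).
  by have := implyP (cE (Ordinal jk)) (ltn_ord j); rewrite -chain_nth_ord.
by apply/implyP=> jl; rewrite -chain_nth_ord; apply: (cE (Ordinal jl)).
Qed.

Definition singular_chains l := [set c in chains h setT set0 k | singular_at_level c l].

Lemma singular_chains0 : singular_chains 0 = set0.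
Proof.
apply/setP=> c; rewrite in_set in_set0 -[c in c \in chains _ _ _ _]chain_nthK.
apply/negP=> /andP[/mkchainP[c0 _ _ _] /singular_at_levelP[cJ _]].
by move: JnEC; rewrite -cJ c0 set0_EC.
Qed.

Lemma card_singular_at : #|[set c in chains h setT set0 k | singular_at g c J]| =
  \sum_(p < k) #|singular_chains (k - p)|.
Proof.
have -> : [set c in chains h setT set0 k | singular_at g c J] =
    \bigcup_(l < k.+1) singular_chains l.
  apply/setP=> c; rewrite in_set singular_atE.
  apply/andP/bigcupP => [[cC /existsP[l sl]]|[l _]]; first by exists l; rewrite // in_set cC.
  by rewrite in_set => /andP[cC sl]; split=> //; apply/existsP; exists l.
rewrite card_bigcup_disjoint; last first.
  move=> c l1 l2; rewrite !in_set => /andP[_ s1] /andP[_ s2].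
  exact/val_inj/(singular_at_level_inj s1 s2).
rewrite big_ord_recl singular_chains0 cards0 add0n (reindex_inj rev_ord_inj) /=.
by apply: eq_bigr => p _; rewrite /bump add1n subnSK.
Qed.

Lemma split_singular l c : 0 < l <= k -> c \in singular_chains l ->
  split_chain l c \in setX (chains h setT J (k - l)) (lower_chains g J l.-1).
Proof.
move=> /andP[l0 lk]; rewrite in_set -[c in c \in chains _ _ _ _]chain_nthK.
case/andP=> /mkchainP[f0 fk fS fP] /singular_at_levelP[fl fE].
have below j : j < l -> chain_nth c j \in EC g (chain_nth c l.-1).
  move=> jl; apply: EC_sub; last by apply: fE.
  by apply: (proper_chain_sub fS); lia.
rewrite in_setX; apply/andP; split.
  apply/mkchainP; split=> [|||j]; rewrite ?addn0 ?subnKC //.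
    by move=> j jkl; rewrite addnS; apply: fS; lia.
  by move=> /andP[j0 jkl]; apply: fP; lia.
have fq : chain_nth c l.-1 \in EC g J.
  by apply: EC_sub; [rewrite -fl; apply: (proper_chain_sub fS) | apply: fE]; lia.
rewrite in_set mkchain_max fq; apply/mkchainP; split=> // [j jq|j jq].
  by apply: fS; lia.
by apply/EC_Pos/below; lia.
Qed.

Lemma join_singular l c : 0 < l <= k ->
  split_chain l c \in setX (chains h setT J (k - l)) (lower_chains g J l.-1) ->
  c \in singular_chains l.
Proof.
move=> /andP[l0 lk]; rewrite in_setX [_ \in lower_chains _ _ _]in_set mkchain_max.
case/andP=> /mkchainP[/= fl fk fSu fPu] /andP[fq /mkchainP[f0 _ fSl fPl]].
rewrite addn0 in fl; rewrite subnKC in fk => //.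
have fE j : j < l -> chain_nth c j \in EC g setT.
  case: j => [_|j jl]; first by rewrite f0 set0_EC.
  by apply: Pos_EC (EC_setT fq) _; apply: fPl; lia.
rewrite in_set -[c in c \in chains _ _ _ _]chain_nthK; apply/andP; split; last first.
  by apply/singular_at_levelP.
apply/mkchainP; split=> // j jk.
  have [jl|lj] := ltnP j.+1 l; first by apply: fSl; lia.
  have [jq|lj'] := ltnP j l.
    have ->: j = l.-1 by lia.
    rewrite prednK ?fl; last by lia.
    rewrite properEneq; move: fq; rewrite in_set => /andP[-> qE]; rewrite andbT.
    by apply: contraNneq JnEC => <-; rewrite in_set subsetT.
  by have := fSu (j - l); rewrite addnS subnKC //; apply; lia.
case/andP: jk => j0 jk; have [jl|lj] := ltnP j l.
  by apply/EC_Pos/EC_add_edge/fE.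
have [->|lj'] := eqVneq j l; first by rewrite fl; apply: EC_Pos.
by have := fPu (j - l); rewrite subnKC //; apply; lia.
Qed.

Lemma card_singular_chains l : 0 < l <= k ->
  #|singular_chains l| = #|chains h setT J (k - l)| * #|lower_chains g J l.-1|.
Proof.
move=> lk; rewrite -cardsX -(card_imset _ (can_inj (join_chainK lk))).
rewrite (can2_imset_pre _ (join_chainK lk) (split_chainK l)).
apply: eq_card => c; rewrite [RHS]inE.
by apply/idP/idP; [exact: split_singular | exact: join_singular].
Qed.
End SingularChains.

Theorem mainTheorem6 (T : finType) (g : rel T) (i : nat) (u v : T)
  (J : {set T}) (k : nat) :
  simple_graph g -> #|T| = 2 * i -> 1 <= i -> u != v ->
  J \in EC (add_edge g u v) setT -> J \notin EC g setT ->
  1 <= k <= i ->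
  #|[set c in chains (add_edge g u v) setT set0 k | singular_at g c J]| =
  \sum_(p < k)
     (#|chains (add_edge g u v) setT J p| *
      \sum_(J' in EC g J) #|chains g J' set0 (k.-1 - p)|).
Proof.
move=> [_ gsym] _ _ _ JEC JnEC _.
rewrite card_singular_at //; apply: eq_bigr => p _; have pk := ltn_ord p.
rewrite (card_singular_chains gsym JEC JnEC); last by lia.
by rewrite card_lower_chains subKn 1?ltnW // (_ : (k - p).-1 = k.-1 - p) //; lia.
Qed.
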